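(* Let $\nu$ be a Borel probability measure on $\operatorname{Hom}(\mathbb{S}^1)$ and let $\nu^-$ be the image of $\nu$ under $f\mapsto f^{-1}$. Assume that $\Gamma_\nu$ is proximal and does not fix any point in $\mathbb{S}^1$. Then $\Gamma_{\nu^-}$ is also proximal and does not fix any point in $\mathbb{S}^1$.
   Context: $\mathbb{S}^1=\mathbb{R}/\mathbb{Z}$ with usual metric $d$; $\operatorname{Hom}(\mathbb{S}^1)$ is the group of all homeomorphisms of $\mathbb{S}^1$. For a probability measure $\mu$ on $\operatorname{Hom}(\mathbb{S}^1)$, $X_\mu$ is its topological support and $\Gamma_\mu$ the semigroup generated by $X_\mu$. $\Gamma_\mu$ is proximal if for all $x,y$ there exists $(g_n)$ in $\Gamma_\mu$ with $d(g_n(x),g_n(y))\to0$; it does not fix any point if no $x$ satisfies $f(x)=x$ for all $f\in\Gamma_\mu$. Here $\nu^-(A)=\nu(\{f: f^{-1}\in A\})$. *)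

From HB Require Import structures.
From mathcomp Require Import all_boot all_order all_algebra.
From mathcomp Require Import all_classical all_reals all_analysis.
From mathcomp Require Import Rstruct Rstruct_topology.
From Stdlib Require Import Rdefinitions.
Set Implicit Arguments. Unset Strict Implicit. Unset Printing Implicit Defensive.
Import Order.TTheory GRing.Theory Num.Theory.
Local Open Scope classical_set_scope.
Local Open Scope ring_scope.

(* The circle S^1 = R/Z, represented by the fundamental domain [0,1). *)
Definition S1 : Type := {x : R | (0 <= x) && (x < 1)}.

(* Usual metric on R/Z : distance of x - y to the nearest integer. *)
Definition dS (x y : S1) : R :=
  let t := sval x - sval y - (Num.floor (sval x - sval y))%:~R in
  Num.min t (1 - t).

Definition S1_continuous (f : S1 -> S1) : Prop :=
  forall (x : S1) (e : R), 0 < e ->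
    exists2 dl : R, 0 < dl & forall y : S1, dS x y < dl -> dS (f x) (f y) < e.

Record Hom := MkHom {
  hfun : S1 -> S1;
  hinv : S1 -> S1;
  hfunK : cancel hfun hinv;
  hinvK : cancel hinv hfun;
  hfun_cont : S1_continuous hfun;
  hinv_cont : S1_continuous hinv }.

Definition Hom_id : Hom :=
  @MkHom id id (fun _ => erefl) (fun _ => erefl)
    (fun x e e0 => ex_intro2 _ _ e e0 (fun _ h => h))
    (fun x e e0 => ex_intro2 _ _ e e0 (fun _ h => h)).

Definition Hom_inverse (f : Hom) : Hom :=
  @MkHom (hinv f) (hfun f) (hinvK f) (hfunK f) (hinv_cont f) (hfun_cont f).

HB.instance Definition _ := gen_eqMixin Hom.
HB.instance Definition _ := gen_choiceMixin Hom.
HB.instance Definition _ := isPointed.Build Hom Hom_id.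

(* Uniform metric on Hom(S^1) (topology of uniform convergence of f and f^-1,
   i.e. the usual compact-open topology of Hom(S^1)). *)
Definition dH (f g : Hom) : R :=
  sup (range (fun x => dS (hfun f x) (hfun g x))) +
  sup (range (fun x => dS (hinv f x) (hinv g x))).

Definition Hom_ball (f : Hom) (e : R) : set Hom := [set g | dH f g < e].

Definition Hom_open (A : set Hom) : Prop :=
  forall f, A f -> exists2 e : R, 0 < e & Hom_ball f e `<=` A.

Definition HomB : measurableType _ := g_sigma_algebraType Hom_open.

(* Topological support of a measure: points all of whose neighbourhoods
   (equivalently, all open balls around them) have positive measure. *)
Definition top_support (nu : {measure set HomB -> \bar R}) : set Hom :=
  [set f | forall e : R, 0 < e -> (0 < nu (Hom_ball f e))%E].

Inductive gen_semigroup (X : set Hom) : (S1 -> S1) -> Prop :=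
  | gs_gen f : X f -> gen_semigroup X (hfun f)
  | gs_comp g h : gen_semigroup X g -> gen_semigroup X h ->
                  gen_semigroup X (g \o h).

Definition proximal (G : (S1 -> S1) -> Prop) : Prop :=
  forall x y : S1, exists g : nat -> (S1 -> S1),
    (forall n, G (g n)) /\
    (fun n => dS (g n x) (g n y)) @ \oo --> (0 : R).

Definition fixes_no_point (G : (S1 -> S1) -> Prop) : Prop :=
  ~ exists x : S1, forall f, G f -> f x = x.

(* Write G for the semigroup generated by the support of nu.  The support of
   nu^- is the image of that of nu under inversion, so the semigroup it
   generates consists of inverses of elements of G; a point fixed by it is
   therefore fixed by G.  For proximality we must find, for x <> y, some g in G
   with g^-1 x and g^-1 y close.  Proximality and compactness of the circle
   let G squeeze any finite set into arbitrarily small neighbourhoods of a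
   single point c, and since G fixes no point, c can be taken different from
   x and y.  Squeeze a grid of mesh 1/N near c by some h in G.  If h^-1 x and
   h^-1 y were at least 1/N apart, two grid points p, q would separate them on the
   circle; but h^-1 maps the arc from x to y that avoids c onto an arc from
   h^-1 x to h^-1 y avoiding p and q, which the intermediate value theorem
   forbids. *)

From Pilot Require Import Defs.
From mathcomp Require Import all_boot all_order all_algebra.
From mathcomp Require Import all_classical all_reals all_analysis.
From mathcomp Require Import Rstruct Rstruct_topology.
From mathcomp Require Import lra.
From Stdlib Require Import Rdefinitions.
Set Implicit Arguments. Unset Strict Implicit. Unset Printing Implicit Defensive.
Import Order.TTheory GRing.Theory Num.Theory.
Local Open Scope classical_set_scope.
Local Open Scope ring_scope.

(** * The circle as R/Z *)

(* Arguments of type R are read in Stdlib's R_scope unless redeclared. *)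
Definition frac (t : R) := t - (Num.floor t)%:~R.
Arguments frac t%_ring_scope.

Lemma frac_itv t : 0 <= frac t < 1.
Proof.
have := floor_itv t; rewrite /frac intrD mulr1z => /andP[h1 h2].
by apply/andP; split; lra.
Qed.

Lemma fracDz t (n : int) : frac (t + n%:~R) = frac t.
Proof. by rewrite /frac floorDrz ?intr_int // intrD intrKfloor; lra. Qed.

Lemma frac_id t : 0 <= t < 1 -> frac t = t.
Proof. by move=> ht; rewrite /frac (@floor_def _ _ 0) ?add0r ?subr0. Qed.

Lemma frac_neg t : -1 <= t < 0 -> frac t = t + 1.
Proof. by move=> ht; rewrite /frac (@floor_def _ _ (-1)) ?addNr ?mulrNz ?opprK. Qed.

Lemma S1_itv (x : S1) : 0 <= sval x < 1.
Proof. exact: valP x. Qed.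

Lemma S1_inj (x y : S1) : sval x = sval y -> x = y.
Proof. exact: val_inj. Qed.

Definition zdist (t : R) := Num.min (frac t) (1 - frac t).
Arguments zdist t%_ring_scope.

Lemma zdist_le t (n : int) : zdist t <= `|t - n%:~R|.
Proof.
have [f0 f1] := andP (frac_itv t).
have -> : t - n%:~R = frac t + (Num.floor t - n)%:~R by rewrite /frac intrB; lra.
rewrite /zdist; case: (lerP 0 (Num.floor t - n)) => [k0|k0].
- have k0' : 0 <= (Num.floor t - n)%:~R :> R by rewrite ler0z.
  by rewrite ger0_norm ?ge_min ?lexx //; lra.
- have k1 : (Num.floor t - n)%:~R <= -1 :> R.
    by rewrite -(rmorphN1 (intr : int -> R)) ler_int -ltzD1 addNr.
  by rewrite ler0_norm ?ge_min; [apply/orP; right; lra | lra].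
Qed.

Lemma zdist_attained t : exists n : int, zdist t = `|t - n%:~R|.
Proof.
have [f0 f1] := andP (frac_itv t).
rewrite /zdist /Num.Def.minr; case: ltP => hf.
- by exists (Num.floor t); rewrite ger0_norm.
- exists (Num.floor t + 1); rewrite intrD mulr1z.
  by rewrite ler0_norm /frac; move: f1; rewrite /frac; lra.
Qed.

Lemma zdist_ge0 t : 0 <= zdist t.
Proof. by have [n ->] := zdist_attained t. Qed.

Lemma zdist_le_norm t : zdist t <= `|t|.
Proof. by have := zdist_le t 0; rewrite subr0. Qed.

Lemma zdist_le_half t : zdist t <= 2^-1.
Proof.
have [f0 f1] := andP (frac_itv t).
rewrite /zdist /Num.Def.minr; case: ltP => hf; lra.
Qed.

Lemma zdistDz t (n : int) : zdist (t + n%:~R) = zdist t.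
Proof. by rewrite /zdist fracDz. Qed.

Lemma zdistN t : zdist (- t) = zdist t.
Proof.
suff le s : zdist (- s) <= zdist s by apply/eqP; rewrite eq_le le /= -{1}(opprK t) le.
have [n ->] := zdist_attained s.
by apply: le_trans (zdist_le _ (- n)) _; rewrite intrN -opprD normrN.
Qed.

Lemma zdistD s t : zdist (s + t) <= zdist s + zdist t.
Proof.
have [m ->] := zdist_attained s; have [n ->] := zdist_attained t.
apply: le_trans (zdist_le _ (m + n)) _.
by rewrite intrD opprD addrACA; apply: ler_normD.
Qed.

Lemma zdist_small t : -1 < t < 1 -> zdist t = Num.min `|t| (1 - `|t|).
Proof.
case/andP=> t1 t2; case: (leP 0 t) => t0.
- by rewrite /zdist frac_id ?ger0_norm //; apply/andP.
- have ht : -1 <= t < 0 by apply/andP; split; lra.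
  by rewrite /zdist frac_neg // ltr0_norm // minC opprK; congr Num.min; lra.
Qed.

Lemma zdist_itv01 t : 0 <= t < 1 -> zdist t = Num.min t (1 - t).
Proof. by move=> t01; rewrite /zdist frac_id. Qed.

Lemma dSE x y : dS x y = zdist (sval x - sval y).
Proof. by []. Qed.

Lemma dS_sym x y : dS x y = dS y x.
Proof. by rewrite !dSE -zdistN opprB. Qed.

Lemma dS_ge0 x y : 0 <= dS x y.
Proof. exact: zdist_ge0. Qed.

Lemma dS_le_half x y : dS x y <= 2^-1.
Proof. exact: zdist_le_half. Qed.

Lemma dS_le_dist x y : dS x y <= `|sval x - sval y|.
Proof. exact: zdist_le_norm. Qed.

Lemma dS_xx x : dS x x = 0.
Proof.
apply/eqP; rewrite eq_le dS_ge0 andbT.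
by have := dS_le_dist x x; rewrite subrr normr0.
Qed.

Lemma dS_triangle x y z : dS x z <= dS x y + dS y z.
Proof.
rewrite !dSE; have -> : sval x - sval z = (sval x - sval y) + (sval y - sval z) by lra.
exact: zdistD.
Qed.

Lemma dS_gt0 x y : x <> y -> 0 < dS x y.
Proof.
move=> xy; have [x0 x1] := andP (S1_itv x); have [y0 y1] := andP (S1_itv y).
have d0 : 0 < `|sval x - sval y|.
  by rewrite normr_gt0 subr_eq0; apply/eqP => /S1_inj.
have d1 : `|sval x - sval y| < 1 by rewrite ltr_norml; apply/andP; split; lra.
by rewrite dSE zdist_small ?lt_min ?d0 /=; [lra | rewrite -ltr_norml].
Qed.

Definition S1_of (t : R) : S1 := exist _ (frac t) (frac_itv t).
Arguments S1_of t%_ring_scope.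

Lemma S1_ofE t : sval (S1_of t) = frac t.
Proof. by []. Qed.

Lemma dS_S1_of s t : dS (S1_of s) (S1_of t) = zdist (s - t).
Proof.
rewrite dSE !S1_ofE.
have -> : frac s - frac t = s - t + (Num.floor t - Num.floor s)%:~R by rewrite /frac intrB; lra.
exact: zdistDz.
Qed.

Lemma S1_ofK : cancel sval S1_of.
Proof. by move=> x; apply: S1_inj; rewrite S1_ofE frac_id // S1_itv. Qed.

Lemma dS_S1_of_le x t : dS x (S1_of t) <= `|sval x - t|.
Proof. by rewrite -{1}(S1_ofK x) dS_S1_of zdist_le_norm. Qed.

(** * Arcs and separation *)

(* The coordinate of z in [0, 1) once the circle is cut open at b. *)
Definition arc (b z : S1) := frac (sval z - sval b).

Lemma arc_itv b z : 0 <= arc b z < 1.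
Proof. exact: frac_itv. Qed.

Lemma arc_id b : arc b b = 0.
Proof. by rewrite /arc subrr frac_id // lexx ltr01. Qed.

Lemma arc_ge b z : sval b <= sval z -> arc b z = sval z - sval b.
Proof.
move=> bz; have [z0 z1] := andP (S1_itv z); have [b0 b1] := andP (S1_itv b).
by rewrite /arc frac_id //; apply/andP; split; lra.
Qed.

Lemma S1_of_arc b z : S1_of (sval b + arc b z) = z.
Proof.
apply: S1_inj; rewrite S1_ofE.
have -> : sval b + arc b z = sval z + (- Num.floor (sval z - sval b))%:~R.
  by rewrite /arc /frac intrN; lra.
by rewrite fracDz frac_id // S1_itv.
Qed.

Lemma arc_S1_of b t : 0 <= t < 1 -> arc b (S1_of (sval b + t)) = t.
Proof.
move=> t01; rewrite /arc S1_ofE.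
have -> : frac (sval b + t) - sval b = t + (- Num.floor (sval b + t))%:~R.
  by rewrite /frac intrN; lra.
by rewrite fracDz frac_id.
Qed.

Lemma arc_inj b : injective (arc b).
Proof. by move=> z z' e; rewrite -(S1_of_arc b z) e S1_of_arc. Qed.

Lemma arc_gt0 p z : z <> p -> 0 < arc p z.
Proof.
move=> zp; rewrite lt0r (proj1 (andP (arc_itv p z))) andbT.
by apply/eqP; rewrite -(arc_id p) => /arc_inj.
Qed.

Lemma dS_arc b z z' : dS z z' = zdist (arc b z - arc b z').
Proof.
have -> : arc b z - arc b z' =
    sval z - sval z' + (Num.floor (sval z' - sval b) - Num.floor (sval z - sval b))%:~R.
  by rewrite /arc /frac intrB; lra.
by rewrite zdistDz.
Qed.

Lemma dS_arc_base b z : dS b z = zdist (arc b z).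
Proof. by rewrite (dS_arc b) arc_id sub0r zdistN. Qed.

Lemma arc_dist_lt p z z' eta : eta <= arc p z -> eta <= 1 - arc p z ->
  dS z z' < eta -> `|arc p z - arc p z'| < eta.
Proof.
move=> e1 e2 hd; have eta0 := le_lt_trans (dS_ge0 z z') hd.
have [a0 a1] := andP (arc_itv p z); have [b0 b1] := andP (arc_itv p z').
have d1 : `|arc p z - arc p z'| <= 1 - eta by rewrite ler_norml; apply/andP; split; lra.
move: hd; rewrite (dS_arc p) zdist_small ?gt_min; last by rewrite -ltr_norml; lra.
by case/orP => //; lra.
Qed.

Definition separates (p q u v : S1) : Prop :=
  arc p u < arc p q < arc p v \/ arc p v < arc p q < arc p u.

Lemma separates_sym p q u v : separates p q u v -> separates p q v u.
Proof. by case; [right|left]. Qed.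

Definition grid (N : nat) : seq S1 := [seq S1_of (i%:R / N%:R) | i <- iota 0 N].

Lemma S1_of_grid (N i : nat) : (i < N)%nat -> sval (S1_of (i%:R / N%:R)) = i%:R / N%:R.
Proof.
move=> iN; have N0 : 0 < N%:R :> R by rewrite ltr0n; case: N iN.
rewrite S1_ofE frac_id // divr_ge0 ?ler0n //=.
by rewrite ltr_pdivrMr // mul1r ltr_nat.
Qed.

Lemma grid_separates (N : nat) eps u v : 1 < N%:R * eps -> eps <= dS u v ->
  exists2 p, p \in grid N & exists2 q, q \in grid N & separates p q u v.
Proof.
wlog uv : u v / sval u <= sval v.
  move=> gen Ne huv; case: (leP (sval u) (sval v)) => [|/ltW] h; first exact: gen.
  have [p gp [q gq s]] := gen v u h Ne ltac:(by rewrite dS_sym).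
  by exists p => //; exists q => //; apply: separates_sym.
move=> Ne huv.
have [u0 u1] := andP (S1_itv u); have [v0 v1] := andP (S1_itv v).
have N0 : (0 < N)%nat by case: N Ne => //; rewrite mul0r ltr10.
have N0' : 0 < N%:R :> R by rewrite ltr0n.
have vu : eps * N%:R <= (sval v - sval u) * N%:R.
  rewrite ler_pM2r //; apply: le_trans huv _; apply: le_trans (dS_le_dist u v) _.
  by rewrite ler0_norm; lra.
pose k := Num.truncn (sval u * N%:R).
have [k1 k2] := andP (truncn_itv (mulr_ge0 u0 (ltW N0'))).
have vN : sval v * N%:R < N%:R by rewrite -[ltRHS]mul1r ltr_pM2r.
have kN : (k.+1 < N)%nat by rewrite -(ltr_nat R) -natr1; lra.
have kN' : (k < N)%nat by apply: ltnW.
(* p <= u < q are consecutive grid points; q < v as the mesh is below eps. *)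
set p := S1_of (k%:R / N%:R); set q := S1_of (k.+1%:R / N%:R).
have pN : sval p * N%:R = k%:R by rewrite S1_of_grid // divfK // gt_eqF.
have qN : sval q * N%:R = k.+1%:R by rewrite S1_of_grid // divfK // gt_eqF.
have pu : sval p <= sval u by rewrite -(ler_pM2r N0') pN.
have uq : sval u < sval q by rewrite -(ltr_pM2r N0') qN.
have qv : sval q < sval v by rewrite -(ltr_pM2r N0') qN -natr1; lra.
exists p; first by apply: map_f; rewrite mem_iota.
exists q; first by apply: map_f; rewrite mem_iota.
by left; rewrite !arc_ge; try lra; apply/andP; split; lra.
Qed.

Definition path_continuous (gam : R -> S1) : Prop :=
  forall t e, 0 < e -> exists2 d, 0 < d & forall s, `|t - s| < d -> dS (gam t) (gam s) < e.

Lemma arc_path_continuous gam p : path_continuous gam -> (forall t, gam t <> p) ->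
  continuous (fun t => arc p (gam t)).
Proof.
move=> gc gp t; apply/(@pseudometric_normed_Zmodule.cvgrPdist_lt _ R^o) => e e0.
have a0 := arc_gt0 (gp t); have [_ a1] := andP (arc_itv p (gam t)).
pose eta := Num.min e (Num.min (arc p (gam t)) (1 - arc p (gam t))).
have eta0 : 0 < eta by rewrite !lt_min e0 a0 subr_gt0 a1.
have [eta_e eta_a eta_1a] : [/\ eta <= e, eta <= arc p (gam t) & eta <= 1 - arc p (gam t)].
  by split; rewrite !ge_min ?lexx ?orbT.
have [d d0 hd] := gc t eta eta0.
apply/nbhs_ballP; exists d => // s ts.
exact: lt_le_trans (arc_dist_lt eta_a eta_1a (hd s ts)) eta_e.
Qed.

Lemma path_not_separating gam p q lo hi : path_continuous gam ->
  (forall t, gam t <> p) -> (forall t, gam t <> q) -> lo <= hi ->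
  ~ separates p q (gam lo) (gam hi).
Proof.
move=> gc gp gq lohi sep.
have [t _ /arc_inj] : exists2 t, t \in `[lo, hi] & arc p (gam t) = arc p q.
  apply: IVT => //; first exact/continuous_subspaceT/arc_path_continuous.
  by case: sep => /andP[h1 h2]; rewrite ge_min le_max (ltW h1) (ltW h2) ?orbT.
exact: gq.
Qed.

Definition clamp (lo hi t : R) := Num.max lo (Num.min t hi).
Arguments clamp (lo hi t)%_ring_scope.

Lemma clamp_itv lo hi t : lo <= hi -> lo <= clamp lo hi t <= hi.
Proof. by move=> lohi; rewrite /clamp le_max lexx ge_max ge_min lexx lohi !orbT. Qed.

Lemma clamp_id lo hi t : lo <= t <= hi -> clamp lo hi t = t.
Proof. by case/andP=> lot thi; rewrite /clamp (min_idPl thi) (max_idPr lot). Qed.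

Lemma clamp_dist lo hi s t : `|clamp lo hi s - clamp lo hi t| <= `|s - t|.
Proof.
have h1 := ler_norm (s - t); have h2 := ler_norm (t - s); rewrite distrC in h2.
rewrite /clamp ler_norml /Num.Def.maxr /Num.Def.minr.
case: (ltP s hi) => ?; case: (ltP t hi) => ? /=.
all: case: ltP => ?; case: ltP => ?; apply/andP; split; lra.
Qed.

Lemma zdist_gt_between delta a b t : 0 <= a < 1 -> 0 <= b < 1 ->
  delta < zdist a -> delta < zdist b -> Num.min a b <= t <= Num.max a b ->
  delta < zdist t.
Proof.
move=> a01 b01 da db /andP[]; rewrite ge_min !le_max => t_lo t_hi.
have [a0 a1] := andP a01; have [b0 b1] := andP b01.
have t01 : 0 <= t < 1 by case/orP: t_lo => ? ; case/orP: t_hi => ?; apply/andP; split; lra.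
move: da db; rewrite !zdist_itv01 // !lt_min => /andP[? ?] /andP[? ?].
by case/orP: t_lo => ?; case/orP: t_hi => ?; apply/andP; split; lra.
Qed.

Lemma preimage_not_separated (h hinv : S1 -> S1) c p q x y delta :
  cancel hinv h -> S1_continuous hinv ->
  dS c (h p) < delta -> dS c (h q) < delta -> delta < dS c x -> delta < dS c y ->
  ~ separates p q (hinv x) (hinv y).
Proof.
move=> hinvK hinv_cont hp hq; rewrite !dS_arc_base => hx hy.
have [a0 a1] := andP (arc_itv c x); have [b0 b1] := andP (arc_itv c y).
set a := arc c x in hx a0 a1 *; set b := arc c y in hy b0 b1 *.
set lo := Num.min a b; set hi := Num.max a b.
have lohi : lo <= hi by rewrite ge_min !le_max lexx.
(* hinv applied to the arc from x to y avoiding c, extended by clamping to R. *)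
pose gam t := hinv (S1_of (sval c + clamp lo hi t)).
have far t : delta < dS c (h (gam t)).
  have /andP[lo_t t_hi] := clamp_itv t lohi.
  have lo0 : 0 <= lo by rewrite le_min a0 b0.
  have hi1 : hi < 1 by rewrite gt_max a1 b1.
  have t01 : 0 <= clamp lo hi t < 1 by apply/andP; split; lra.
  rewrite /gam hinvK dS_arc_base arc_S1_of //.
  by apply: zdist_gt_between hx hy _ => //; apply/andP.
have avoid z : dS c (h z) < delta -> forall t, gam t <> z.
  by move=> hz t gz; have := far t; rewrite gz; lra.
have gam_cont : path_continuous gam.
  move=> t e e0; have [d d0 hd] := hinv_cont (S1_of (sval c + clamp lo hi t)) e e0.
  exists d => // s ts; apply: hd; rewrite dS_S1_of.
  apply: le_lt_trans (zdist_le_norm _) _; rewrite opprD addrACA subrr add0r.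
  exact: le_lt_trans (clamp_dist _ _ t s) ts.
have gam_arc z : lo <= arc c z <= hi -> gam (arc c z) = hinv z.
  by move=> hz; rewrite /gam clamp_id // S1_of_arc.
have gx : gam a = hinv x by apply: gam_arc; rewrite ge_min le_max !lexx.
have gy : gam b = hinv y by apply: gam_arc; rewrite ge_min le_max !lexx !orbT.
have := path_not_separating gam_cont (avoid _ hp) (avoid _ hq) lohi.
have [[-> ->]|[-> ->]] : (lo = a /\ hi = b) \/ (lo = b /\ hi = a).
  by rewrite /lo /hi /Num.Def.minr /Num.Def.maxr; case: ltP => _; [left|right].
- by rewrite gx gy.
- by rewrite gx gy => + /separates_sym.
Qed.

(** * Sequential compactness *)

Lemma near_forall_seq (T : Type) (F : set_system T) (I : eqType) (s : seq I)
    (P : I -> T -> Prop) : Filter F ->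
  (forall i, i \in s -> \forall t \near F, P i t) ->
  \forall t \near F, forall i, i \in s -> P i t.
Proof.
move=> FF; elim: s => [|j s IHs] Ps; first exact: nearW.
apply: filterS (filterI (Ps j (mem_head j s)) (IHs _)) => [t [Pj Ps'] i|i si].
  by rewrite in_cons => /orP[/eqP->|]; [exact: Pj | exact: Ps'].
by apply: Ps; rewrite in_cons si orbT.
Qed.

Definition S1_cvg (u : nat -> S1) (c : S1) : Prop :=
  forall e, 0 < e -> \forall n \near \oo, dS (u n) c < e.

Lemma near_subseq (P : nat -> Prop) (phi : nat -> nat) : (forall n, (n <= phi n)%nat) ->
  (\forall n \near \oo, P n) -> \forall n \near \oo, P (phi n).
Proof.
move=> phi_ge [N _ PN].
by exists N => // n /= Nn; apply: PN; exact: leq_trans Nn (phi_ge n).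
Qed.

Lemma S1_cvg_continuous f u c : S1_continuous f -> S1_cvg u c -> S1_cvg (f \o u) (f c).
Proof.
move=> fc uc e e0; have [d d0 fd] := fc c e e0.
by apply: filterS (uc d d0) => n un /=; rewrite dS_sym; apply: fd; rewrite dS_sym.
Qed.

Lemma S1_cvg_close u v c : S1_cvg u c ->
  (forall e, 0 < e -> \forall n \near \oo, dS (v n) (u n) < e) -> S1_cvg v c.
Proof.
move=> uc vu e e0; have e2 : 0 < e / 2 by rewrite divr_gt0.
apply: filterS2 (uc _ e2) (vu _ e2) => n un vn.
by apply: le_lt_trans (dS_triangle _ (u n) _) _; lra.
Qed.

Lemma S1_seq_compact (w : nat -> S1) :
  exists2 phi : nat -> nat, (forall n, (n <= phi n)%nat) & exists c, S1_cvg (w \o phi) c.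
Proof.
have [|phi phi_incr /cvg_ex[l wl]] := @bolzano_weierstrass R (fun n => sval (w n)).
  exists 1; split; first by rewrite num_real.
  move=> r r1 n _; have [x0 x1] := andP (S1_itv (w n)).
  rewrite /= ger0_norm //; lra.
exists phi.
  move/increasing_seqP: phi_incr => phi_incr.
  by elim => [|n IHn] //; apply: leq_ltn_trans IHn (phi_incr n).
exists (S1_of l) => e e0.
move/(@pseudometric_normed_Zmodule.cvgrPdist_lt _ R^o): wl => /(_ e e0).
by apply: filterS => n; rewrite distrC; apply: le_lt_trans (dS_S1_of_le _ _).
Qed.

Lemma S1_seq_compact_finite (S : seq S1) (g : nat -> S1 -> S1) :
  exists2 phi : nat -> nat, (forall n, (n <= phi n)%nat) &
    exists lim : S1 -> S1, forall p, p \in S -> S1_cvg (fun n => g (phi n) p) (lim p).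
Proof.
elim: S => [|a S [phi phi_ge [lim limS]]]; first by exists id => //; exists id.
have [psi psi_ge [c ac]] := S1_seq_compact (fun n => g (phi n) a).
exists (phi \o psi) => [n|]; first exact: leq_trans (psi_ge n) (phi_ge _).
exists (fun p => if p == a then c else lim p) => p; rewrite in_cons.
case: eqP => [-> _|_ /= pS]; first exact: ac.
by move=> e e0; apply: near_subseq psi_ge (limS p pS e e0).
Qed.

(** * Proximal semigroups without fixed points *)

Section ProximalSemigroup.
Variable G : (S1 -> S1) -> Prop.
Hypothesis G_comp : forall f g, G f -> G g -> G (f \o g).
Hypothesis G_cont : forall f, G f -> S1_continuous f.
Hypothesis G_inv : forall f, G f ->
  exists finv, [/\ cancel f finv, cancel finv f & S1_continuous finv].
Hypothesis G_prox : proximal G.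
Hypothesis G_nofix : fixes_no_point G.

Lemma proximal_near x y : exists2 g : nat -> S1 -> S1, (forall n, G (g n)) &
  forall e, 0 < e -> \forall n \near \oo, dS (g n x) (g n y) < e.
Proof.
have [g [Gg gxy]] := G_prox x y; exists g => // e e0.
move/(@pseudometric_normed_Zmodule.cvgrPdist_lt _ R^o): gxy => /(_ e e0).
by apply: filterS => n; rewrite sub0r normrN ger0_norm // dS_ge0.
Qed.

Lemma G_nonempty : exists f, G f.
Proof. by have [g Gg _] := proximal_near (S1_of 0) (S1_of 0); exists (g 0%nat). Qed.

Definition contracts_to (S : seq S1) (c : S1) : Prop :=
  forall eta, 0 < eta -> exists2 h, G h & forall p, p \in S -> dS (h p) c < eta.

Lemma contracts_to_comp S c k : G k -> contracts_to S c -> contracts_to S (k c).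
Proof.
move=> Gk Sc eta eta0; have [d d0 kd] := G_cont Gk c eta0.
have [h Gh hS] := Sc d d0.
exists (k \o h) => [|p pS /=]; first exact: G_comp.
by rewrite dS_sym; apply: kd; rewrite dS_sym; apply: hS.
Qed.

Lemma contracts_to_limit (g : nat -> S1 -> S1) S T c : (forall n, G (g n)) ->
  (forall p, p \in S -> exists2 t, t \in T & S1_cvg (fun n => g n p) t) ->
  contracts_to T c -> contracts_to S c.
Proof.
move=> Gg ST Tc eta eta0; have eta2 : 0 < eta / 2 by rewrite divr_gt0.
have [h Gh hT] := Tc _ eta2.
have [N _ HN] : \forall n \near \oo, forall p, p \in S -> dS (h (g n p)) c < eta.
  apply: near_forall_seq => p /ST[t tT gt].
  apply: filterS (S1_cvg_continuous (G_cont Gh) gt eta2) => n hn /=.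
  by apply: le_lt_trans (dS_triangle _ (h t) _) _; have := hT t tT; lra.
by exists (h \o g N); [exact: G_comp | exact: (HN N (leqnn N))].
Qed.

Lemma contraction_point_exists S : exists c, contracts_to S c.
Proof.
have [f Gf] := G_nonempty.
suff: forall n S, (size S <= n)%nat -> exists c, contracts_to S c by apply; exact: leqnn.
elim=> [|m IHm] [|a [|b R]] // hS; try by exists (S1_of 0) => eta _; exists f.
- exists (f a) => eta eta0; exists f => // p; rewrite mem_seq1 => /eqP->.
  by rewrite dS_xx.
(* Proximality glues b to a; along a subsequence on which all points converge,
   the limits form a set with one point fewer. *)
have [g Gg gab] := proximal_near a b.
have [phi phi_ge [lim glim]] := S1_seq_compact_finite (a :: R) g.
have [|c Tc] := IHm (lim a :: map lim R); first by rewrite /= size_map.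
exists c; apply: (contracts_to_limit (g := g \o phi)) Tc => [n|p]; first exact: Gg.
have glima : S1_cvg (fun n => g (phi n) a) (lim a) by apply: glim; exact: mem_head.
rewrite !in_cons => /or3P[/eqP->|/eqP->|pR]; first by exists (lim a) => //; exact: mem_head.
- exists (lim a); first exact: mem_head.
  apply: S1_cvg_close glima _ => e e0.
  by apply: filterS (near_subseq phi_ge (gab e e0)) => n; rewrite dS_sym.
- exists (lim p); first by rewrite in_cons map_f ?orbT.
  by apply: glim; rewrite in_cons pR orbT.
Qed.

Lemma pair_not_invariant x y : x <> y ->
  exists2 k, G k & exists2 z, z = x \/ z = y & k z <> x /\ k z <> y.
Proof.
move=> xy; apply: contrapT => inv.
have stay k z : G k -> z = x \/ z = y -> k z = x \/ k z = y.
  move=> Gk zxy; apply: contrapT => kz; apply: inv; exists k => //; exists z => //.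
  by split=> e; apply: kz; [left|right].
have [g Gg gxy] := proximal_near x y.
have [N _ /(_ N (leqnn N)) gN] := gxy _ (dS_gt0 xy).
have [ginv [gK _ _]] := G_inv (Gg N).
have ginj : g N x <> g N y by move/(can_inj gK).
have [] := stay _ x (Gg N) (or_introl erefl); have [] := stay _ y (Gg N) (or_intror erefl).
all: move: gN ginj => + + e1 e2; rewrite e1 e2 ?(dS_sym y x) ?ltxx //.
all: by move=> _; apply.
Qed.

Lemma orbit_point_avoiding c x y : x <> y ->
  exists k, (k = id \/ G k) /\ (k c <> x /\ k c <> y).
Proof.
move=> xy; have [k Gk [z zxy [kzx kzy]]] := pair_not_invariant xy.
have [cxy|cxy] := pselect (c = x \/ c = y); last first.
  by exists id; split; [left | split=> e; apply: cxy; [left|right]].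
have [->|cz] := pselect (c = z); first by exists k; split; [right|].
have [m Gm mc] : exists2 m, G m & m c <> c.
  apply: contrapT => cfix; apply: G_nofix; exists c => f Gf.
  by apply: contrapT => fc; apply: cfix; exists f.
have [mcxy|mcxy] := pselect (m c = x \/ m c = y); last first.
  by exists m; split; [right | split=> e; apply: mcxy; [left|right]].
have mcz : m c = z.
  by case: cxy => cE; case: mcxy => mE; case: zxy => zE; congruence.
by exists (k \o m); split; [right; exact: G_comp | rewrite /= mcz].
Qed.

Lemma contraction_point_avoiding S x y : x <> y ->
  exists c, [/\ contracts_to S c, c <> x & c <> y].
Proof.
move=> xy; have [c Sc] := contraction_point_exists S.
have [k [[->|Gk] [kcx kcy]]] := orbit_point_avoiding c xy; first by exists c.
by exists (k c); split=> //; exact: contracts_to_comp.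
Qed.

Lemma inverse_contracts x y eps : 0 < eps ->
  exists2 g, G g & forall ginv, cancel g ginv -> dS (ginv x) (ginv y) < eps.
Proof.
move=> eps0; have [<-|xy] := pselect (x = y).
  by have [f Gf] := G_nonempty; exists f => // ? _; rewrite dS_xx.
pose N := (Num.truncn eps^-1).+1.
have Neps : 1 < N%:R * eps by rewrite -ltr_pdivrMr // div1r truncnS_gt.
have [c [Gc cx cy]] := contraction_point_avoiding (grid N) xy.
have dcx := dS_gt0 cx; have dcy := dS_gt0 cy.
pose delta := Num.min (dS c x) (dS c y) / 2.
have [delta0 dx dy] : [/\ 0 < delta, delta < dS c x & delta < dS c y].
  have : 0 < Num.min (dS c x) (dS c y) by rewrite lt_min dcx dcy.
  have : Num.min (dS c x) (dS c y) <= dS c x by rewrite ge_min lexx.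
  have : Num.min (dS c x) (dS c y) <= dS c y by rewrite ge_min lexx orbT.
  by rewrite /delta; split; lra.
have [h Gh hgrid] := Gc delta delta0.
have [hinv [hK hinvK hinv_cont]] := G_inv Gh.
exists h => // ginv hginv.
have ginvE z : ginv z = hinv z by rewrite -{1}(hinvK z) hginv.
rewrite !ginvE ltNge; apply/negP => sep.
have [p pN [q qN]] := grid_separates Neps sep.
by apply: preimage_not_separated hinvK hinv_cont _ _ dx dy; rewrite dS_sym; apply: hgrid.
Qed.

End ProximalSemigroup.

(** * Semigroups generated by supports *)

Lemma proximal_of_close (G : (S1 -> S1) -> Prop) :
  (forall x y e, 0 < e -> exists2 g, G g & dS (g x) (g y) < e) -> proximal G.
Proof.
move=> close x y.
have /choice[g gP] : forall n, exists g, G g /\ dS (g x) (g y) < harmonic n.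
  by move=> n; have [g Gg gn] := close x y _ (harmonic_gt0 n); exists g.
exists g; split=> [n|]; first by case: (gP n).
apply: (@squeeze_cvgr _ _ _ _ (cst 0) harmonic); [|exact: cvg_cst|exact: cvg_harmonic].
by apply: nearW => n; rewrite dS_ge0 ltW //; case: (gP n).
Qed.

Definition sup_dist (a b : S1 -> S1) : R := sup (range (fun x => dS (a x) (b x))).

Lemma sup_dist_ub a b x : dS (a x) (b x) <= sup_dist a b.
Proof.
apply: sup_upper_bound; last by exists x.
split; first by exists (dS (a x) (b x)), x.
by exists 2^-1 => _ [z _ <-]; exact: dS_le_half.
Qed.

Lemma sup_dist_le a b M : (forall x, dS (a x) (b x) <= M) -> sup_dist a b <= M.
Proof.
move=> aM; apply: ge_sup; first by exists (dS (a (S1_of 0)) (b (S1_of 0))), (S1_of 0).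
by move=> _ [x _ <-]; exact: aM.
Qed.

Lemma sup_dist_triangle a b c : sup_dist a c <= sup_dist a b + sup_dist b c.
Proof.
apply: sup_dist_le => x; apply: le_trans (dS_triangle _ (b x) _) _.
by apply: lerD; exact: sup_dist_ub.
Qed.

Lemma dH_triangle f g h : dH f h <= dH f g + dH g h.
Proof.
have := sup_dist_triangle (hfun f) (hfun g) (hfun h).
have := sup_dist_triangle (hinv f) (hinv g) (hinv h).
rewrite /dH /sup_dist !RplusE; lra.
Qed.

Lemma Hom_ball_open f e : Hom_open (Hom_ball f e).
Proof.
move=> g fg; exists (e - dH f g); first by rewrite subr_gt0.
by move=> k gk; have := dH_triangle f g k; rewrite /Hom_ball /= in gk *; lra.
Qed.

Lemma Hom_ball_measurable f e : measurable (Hom_ball f e : set HomB).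
Proof. by apply: sub_sigma_algebra; exact: Hom_ball_open. Qed.

Lemma preimage_Hom_inverse_ball f e :
  Hom_inverse @^-1` Hom_ball f e = Hom_ball (Hom_inverse f) e.
Proof. by apply/seteqP; split=> g; rewrite /Hom_ball /preimage /= /dH /= !RplusE addrC. Qed.

Lemma top_support_image (nu nu_inv : probability HomB R) :
  (forall A : set HomB, measurable A -> nu_inv A = nu (Hom_inverse @^-1` A)) ->
  forall f, top_support nu_inv f <-> top_support nu (Hom_inverse f).
Proof.
move=> nu_invE f; have ballE e : nu_inv (Hom_ball f e) = nu (Hom_ball (Hom_inverse f) e).
  by rewrite -preimage_Hom_inverse_ball; apply: nu_invE; exact: Hom_ball_measurable.
by split=> supp e e0; have := supp e e0; rewrite /= ?ballE.
Qed.

Lemma S1_continuous_comp f g : S1_continuous f -> S1_continuous g -> S1_continuous (f \o g).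
Proof.
move=> fc gc x e e0; have [d d0 fd] := fc (g x) e e0; have [d' d0' gd] := gc x d d0.
by exists d' => // y xy; apply/fd/gd.
Qed.

Lemma gen_semigroup_continuous X g : gen_semigroup X g -> S1_continuous g.
Proof. by elim=> [f _|g1 g2 _ g1c _ g2c]; [exact: hfun_cont | exact: S1_continuous_comp]. Qed.

Lemma gen_semigroup_inverse (X Y : set Defs.Hom) : (forall f, X f -> Y (Hom_inverse f)) ->
  forall g, gen_semigroup X g ->
  exists g', [/\ gen_semigroup Y g', cancel g g' & cancel g' g].
Proof.
move=> XY g; elim=> [f Xf|g1 g2 _ [g1' [Y1 K1 K1']] _ [g2' [Y2 K2 K2']]].
  by exists (hinv f); split; [exact: (gs_gen (XY f Xf)) | exact: hfunK | exact: hinvK].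
exists (g2' \o g1'); split; first exact: gs_comp.
  by move=> z /=; rewrite K1 K2.
by move=> z /=; rewrite K2' K1'.
Qed.

Unset Implicit Arguments.

Theorem proposition3p4
  (nu nu_inv : probability HomB R)
  (Hinv : forall A : set HomB, measurable A ->
            nu_inv A = nu (Hom_inverse @^-1` A))
  (Hprox : proximal (gen_semigroup (top_support nu)))
  (Hfix : fixes_no_point (gen_semigroup (top_support nu))) :
  proximal (gen_semigroup (top_support nu_inv)) /\
  fixes_no_point (gen_semigroup (top_support nu_inv)).
Proof.
have supp_inv f : top_support nu f -> top_support nu_inv (Hom_inverse f).
  by move=> f_supp; apply/(top_support_image Hinv); case: f f_supp.
have G_inv := gen_semigroup_inverse supp_inv.
split.
- apply: proximal_of_close => x y e e0.
  have [|g Gg gxy] := inverse_contracts (@gs_comp _) (@gen_semigroup_continuous _) _ Hprox Hfix x y e0.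
    move=> f /G_inv[f' [Yf' fK f'K]]; exists f'; split=> //.
    exact: gen_semigroup_continuous Yf'.
  by have [g' [Yg' gK _]] := G_inv g Gg; exists g'; last exact: gxy.
- move=> [x xfix]; apply: Hfix; exists x => f Gf.
  by have [f' [Yf' _ f'K]] := G_inv f Gf; rewrite -{1}(xfix f' Yf') f'K.
Qed.
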